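(* Let $R$ be a commutative ring with identity. Then $R$ is almost complemented and roughly reduced if and only if $R$ is roughly complemented.
   Context: $\mathfrak{N}(R)$ is the nilradical, $\mathrm{reg}(R)$ the regular elements, $\mathrm{areg}(R)=\{x: x+\mathfrak{N}(R)\in\mathrm{reg}(R/\mathfrak{N}(R))\}$ (equivalently $xa\in\mathfrak{N}(R)\Rightarrow a\in\mathfrak{N}(R)$). $R$ is almost complemented if $R/\mathfrak{N}(R)$ is complemented, i.e. for each $\bar a$ there is $\bar b$ with $\bar a\bar b=0$ and $\bar a+\bar b$ regular in $R/\mathfrak{N}(R)$. Let $\eta(R)=\bigcup_{s\in\mathrm{areg}(R)}\mathrm{Ann}(s)$; $R$ is roughly reduced if $\eta(R)=\mathfrak{N}(R)$. An element $a$ is roughly complemented if there is $b$ with $ab=0$ and $a+b\in\mathrm{areg}(R)$; $R$ is roughly complemented if every element is. *)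

From mathcomp Require Import all_boot all_algebra.
Set Implicit Arguments. Unset Strict Implicit. Unset Printing Implicit Defensive.
Import GRing.Theory.
Local Open Scope ring_scope.

Section Defs.
Variable R : comPzRingType.

Definition in_nilrad (x : R) : Prop := exists n : nat, x ^+ n = 0.

(* x + N(R) is regular (a non-zero-divisor) in R/N(R), unfolded:
   (x+N)(a+N) = 0 in R/N  implies  a+N = 0 in R/N *)
Definition areg (x : R) : Prop := forall a : R, in_nilrad (x * a) -> in_nilrad a.

(* R/N(R) complemented, unfolded on representatives *)
Definition almost_complemented : Prop :=
  forall a : R, exists b : R, in_nilrad (a * b) /\ areg (a + b).

Definition ann (s : R) (x : R) : Prop := s * x = 0.

Definition in_eta (x : R) : Prop := exists s : R, areg s /\ ann s x.

Definition roughly_reduced : Prop := forall x : R, in_eta x <-> in_nilrad x.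

Definition roughly_complemented_elt (a : R) : Prop :=
  exists b : R, a * b = 0 /\ areg (a + b).

Definition roughly_complemented : Prop :=
  forall a : R, roughly_complemented_elt a.
End Defs.

From mathcomp Require Import all_boot all_algebra.
From mathcomp Require Import ring.
Set Implicit Arguments. Unset Strict Implicit. Unset Printing Implicit Defensive.
Import GRing.Theory.
Local Open Scope ring_scope.

(* Everything happens modulo the nilradical, where R/N(R) is reduced.
   (<=) If a b = 0 and a + b is almost regular, then a b is nilpotent, so R is
   almost complemented; and a nilpotent x has a complement b with x b = 0 and
   a + b almost regular, hence b itself is almost regular and kills x, so
   N(R) is contained in eta(R) (the other inclusion always holds).
   (=>) Let a b be nilpotent with a + b almost regular.  Roughly reduced gives
   an almost regular s with s a b = 0, and b' := s b is a genuine complement: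
   if (a + s b) x is nilpotent, multiplying by a and by b and using that
   R/N(R) is reduced shows that a x and b x are nilpotent, hence so is x. *)

Section Nilradical.
Variable R : comPzRingType.
Implicit Types a b n s x y : R.

Lemma nilrad0 : in_nilrad (0 : R).
Proof. by exists 1%N; rewrite expr1. Qed.

Lemma nilradMr x y : in_nilrad x -> in_nilrad (x * y).
Proof. by move=> [n xn0]; exists n; rewrite exprMn xn0 mul0r. Qed.

Lemma nilradMl x y : in_nilrad y -> in_nilrad (x * y).
Proof. by rewrite mulrC; apply: nilradMr. Qed.

Lemma nilradD x y : in_nilrad x -> in_nilrad y -> in_nilrad (x + y).
Proof.
move=> [m xm0] [n yn0]; exists (m + n)%N; rewrite exprDn big1 // => i _.
have [lt_i_n | le_n_i] := ltnP i n.
  by rewrite -addnBA ?(ltnW lt_i_n) // exprD xm0 !mul0r mul0rn.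
by rewrite -(subnK le_n_i) exprD yn0 !mulr0 mul0rn.
Qed.

Lemma nilradN x : in_nilrad x -> in_nilrad (- x).
Proof. by rewrite -mulN1r; apply: nilradMl. Qed.

Lemma nilradDr x y : in_nilrad y -> in_nilrad (x + y) -> in_nilrad x.
Proof. by move=> ny nxy; rewrite -(addrK y x); apply: nilradD; last apply: nilradN. Qed.

Lemma nilrad_sqr x : in_nilrad (x * x) -> in_nilrad x.
Proof. by move=> [n xxn0]; exists (2 * n)%N; rewrite exprM expr2. Qed.

Lemma nilrad_mulsqr a x : in_nilrad (a * a * x) -> in_nilrad (a * x).
Proof.
move=> naax; apply: nilrad_sqr.
by rewrite mulrACA mulrA; apply: nilradMr.
Qed.

Lemma aregD_nilrad a b x :
  areg (a + b) -> in_nilrad (a * x) -> in_nilrad (b * x) -> in_nilrad x.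
Proof. by move=> regab nax nbx; apply: regab; rewrite mulrDl; apply: nilradD. Qed.

Lemma areg_nilradD n x : in_nilrad n -> areg (n + x) -> areg x.
Proof. by move=> nn regnx y nxy; apply: (aregD_nilrad regnx) => //; apply: nilradMr. Qed.

Lemma eta_nilrad x : in_eta x -> in_nilrad x.
Proof. by move=> [s [regs sx0]]; apply: regs; rewrite sx0; apply: nilrad0. Qed.

Lemma nilrad_eta_complemented x :
  roughly_complemented_elt x -> in_nilrad x -> in_eta x.
Proof.
move=> [b [xb0 regxb]] nx; exists b; split; last by rewrite /ann mulrC.
exact: areg_nilradD regxb.
Qed.

Lemma roughly_complemented_scale a b s :
  areg (a + b) -> in_nilrad (a * b) -> areg s -> s * (a * b) = 0 ->
  roughly_complemented_elt a.
Proof.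
move=> regab nab regs sab0; exists (s * b); split; first by rewrite mulrCA.
move=> x nx; apply: (aregD_nilrad regab).
  apply: nilrad_mulsqr.
  have -> : a * a * x = a * ((a + s * b) * x) - s * (a * b) * x by ring.
  by rewrite sab0 mul0r subr0; apply: nilradMl.
apply: nilrad_mulsqr; apply: regs; apply: (nilradDr (y := a * b * x)).
  exact: nilradMr.
have -> : s * (b * b * x) + a * b * x = b * ((a + s * b) * x) by ring.
exact: nilradMl.
Qed.

End Nilradical.

Theorem mainTheorem16 (R : comPzRingType) :
  (almost_complemented R /\ roughly_reduced R) <-> roughly_complemented R.
Proof.
split=> [[compR redR] a | complR].
  have [b [nab regab]] := compR a.
  have [s [regs sab0]] := (redR (a * b)).2 nab.
  exact: roughly_complemented_scale regab nab regs sab0.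
split=> [a | x].
  have [b [ab0 regab]] := complR a.
  by exists b; rewrite ab0; split; first exact: nilrad0.
by split; [apply: eta_nilrad | apply: nilrad_eta_complemented].
Qed.
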